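(* Let $M$ be an automaton with $\mathit{regular\_ta}(M)$. Then $\mathit{tau\_sim}\ M\ (\mathit{tauclose\_ta}\ M)$.
   Context: Actions are $\mathit{NoAct}$ (silent) and $\mathit{AssAct}\ x\ v$. An edge over node type $N$ is a record $(\mathit{source},\mathit{action},\mathit{dest})$ with source and destination in $N$. An automaton over $N$ is a record with a list $\mathit{nodes}$ of nodes, a list $\mathit{edges}$ of edges, and an initial node $\mathit{init\_s}$. $\mathit{regular\_ta}(M)$ means $\mathit{init\_s}(M)\in\mathit{nodes}(M)$ and every edge of $M$ has source and destination in $\mathit{nodes}(M)$. $\mathit{tauclose\_step}\ M\ s\ X = \{s\}\cup X\cup\{n\in\mathit{nodes}(M) : \exists e\in\mathit{edges}(M).\ \mathit{source}\ e\in X \wedge \mathit{action}\ e=\mathit{NoAct}\wedge \mathit{dest}\ e=n\}$; this is monotone in $X$, and $\mathit{tauclose}\ M\ s$ is its least fixed point. $\mathit{tauclose\_ta}\ M$ is the automaton over sets of nodes with: $\mathit{nodes}$ the list of $\mathit{tauclose}\ M\ n$ for $n\in\mathit{nodes}(M)$; $\mathit{init\_s}=\mathit{tauclose}\ M\ (\mathit{init\_s}\ M)$; $\mathit{edges}$ the list of those edges $(\mathit{source}=\mathit{tauclose}\ M\ n_1,\mathit{action}=a,\mathit{dest}=\mathit{tauclose}\ M\ n_2)$, where $n_1,n_2\in\mathit{nodes}(M)$ and $a$ is the action of some edge of $M$, for which there exist $s_1,s_2$ with $\mathit{tauclose}\ M\ s_1=\mathit{tauclose}\ M\ n_1$, $\mathit{tauclose}\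 M\ s_2=\mathit{tauclose}\ M\ n_2$, $a\neq\mathit{NoAct}$, and some $s\in\mathit{tauclose}\ M\ s_1$ with $(\mathit{source}=s,\mathit{action}=a,\mathit{dest}=s_2)\in\mathit{edges}(M)$. For automata $M_1,M_2$, $\mathit{tau\_sim}\ M_1\ M_2$ holds iff there is a relation $R$ between nodes of $M_1$ and nodes of $M_2$ with $R(\mathit{init\_s}\ M_1,\mathit{init\_s}\ M_2)$ such that whenever $R(s_1,s_2)$ and $(\mathit{source}=s_1,\mathit{action}=a,\mathit{dest}=s_1')\in\mathit{edges}(M_1)$, then either ($a=\mathit{NoAct}$ and $R(s_1',s_2)$) or there is $s_2'$ with $(\mathit{source}=s_2,\mathit{action}=a,\mathit{dest}=s_2')\in\mathit{edges}(M_2)$ and $R(s_1',s_2')$. *)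

From Stdlib Require Import List ClassicalDescription.
Import ListNotations.
Set Implicit Arguments.

Inductive action (Var Val : Type) : Type :=
| NoAct : action Var Val
| AssAct : Var -> Val -> action Var Val.
Arguments NoAct {Var Val}.
Arguments AssAct {Var Val} _ _.

Record edge (Var Val N : Type) : Type := mkEdge {
  source : N;
  act : action Var Val;
  dest : N }.

Record ta (Var Val N : Type) : Type := mkTa {
  nodes : list N;
  edges : list (edge Var Val N);
  init_s : N }.

Definition regular_ta (Var Val N : Type) (M : ta Var Val N) : Prop :=
  In (init_s M) (nodes M) /\
  (forall e, In e (edges M) -> In (source e) (nodes M) /\ In (dest e) (nodes M)).

Definition tauclose_step (Var Val N : Type) (M : ta Var Val N) (s : N)
  (X : N -> Prop) : N -> Prop :=
  fun n => n = s \/ X n \/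
    (In n (nodes M) /\
     exists e, In e (edges M) /\ X (source e) /\ act e = NoAct /\ dest e = n).

(* Least fixed point (Knaster–Tarski): intersection of all prefixed points. *)
Definition tauclose (Var Val N : Type) (M : ta Var Val N) (s : N) : N -> Prop :=
  fun n => forall X : N -> Prop,
    (forall m, tauclose_step M s X m -> X m) -> X n.

Definition tauclose_edge_cond (Var Val N : Type) (M : ta Var Val N)
  (n1 n2 : N) (a : action Var Val) : Prop :=
  exists s1 s2,
    tauclose M s1 = tauclose M n1 /\ tauclose M s2 = tauclose M n2 /\
    a <> NoAct /\
    exists s, tauclose M s1 s /\ In (mkEdge s a s2) (edges M).

Definition tauclose_ta (Var Val N : Type) (M : ta Var Val N)
  : ta Var Val (N -> Prop) :=
  {| nodes := map (tauclose M) (nodes M);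
     edges :=
       flat_map (fun n1 =>
         flat_map (fun n2 =>
           flat_map (fun a =>
             if excluded_middle_informative (tauclose_edge_cond M n1 n2 a)
             then [mkEdge (tauclose M n1) a (tauclose M n2)]
             else [])
           (map (@act _ _ _) (edges M)))
         (nodes M))
       (nodes M);
     init_s := tauclose M (init_s M) |}.

Definition tau_sim (Var Val N1 N2 : Type) (M1 : ta Var Val N1)
  (M2 : ta Var Val N2) : Prop :=
  exists R : N1 -> N2 -> Prop,
    R (init_s M1) (init_s M2) /\
    forall s1 s2 a s1',
      R s1 s2 -> In (mkEdge s1 a s1') (edges M1) ->
      (a = NoAct /\ R s1' s2) \/
      (exists s2', In (mkEdge s2 a s2') (edges M2) /\ R s1' s2').

From Stdlib Require Import List ClassicalDescription.

(* A node s of M is simulated by every closure tauclose M n (n a node) that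
   contains s: silent edges out of s stay inside that closure, and a visible
   edge s -a-> s' is matched by the edge tauclose M n -a-> tauclose M s' of
   the closed automaton, which exists precisely because s lies in the closure. *)

Section TauClosure.

Context {Var Val N : Type} (M : ta Var Val N).

Lemma tauclose_refl (s : N) : tauclose M s s.
Proof. intros X HX. apply HX. left. reflexivity. Qed.

Lemma tauclose_silent_step (n s s' : N) :
  tauclose M n s -> In (mkEdge s NoAct s') (edges M) -> In s' (nodes M) ->
  tauclose M n s'.
Proof.
  intros Hs He Hs' X HX. apply HX. right; right.
  split; [exact Hs'|].
  exists (mkEdge s NoAct s'). repeat split; auto.
  apply Hs; exact HX.
Qed.

Lemma tauclose_ta_visible_edge (n s s' : N) (a : action Var Val) :
  In n (nodes M) -> In s' (nodes M) -> a <> NoAct ->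
  tauclose M n s -> In (mkEdge s a s') (edges M) ->
  In (mkEdge (tauclose M n) a (tauclose M s')) (edges (tauclose_ta M)).
Proof.
  intros Hn Hs' Ha Hs He. simpl.
  apply in_flat_map. exists n. split; [exact Hn|].
  apply in_flat_map. exists s'. split; [exact Hs'|].
  apply in_flat_map. exists a. split.
  - apply in_map_iff. exists (mkEdge s a s'). auto.
  - destruct (excluded_middle_informative _) as [_ | Hcond]; [left; reflexivity|].
    exfalso. apply Hcond.
    exists n, s'. repeat split; auto.
    exists s. auto.
Qed.

Definition in_tauclose_of_node (s : N) (X : N -> Prop) : Prop :=
  exists n, In n (nodes M) /\ X = tauclose M n /\ tauclose M n s.

End TauClosure.

Theorem theorem2 (Var Val N : Type) (M : ta Var Val N) :
  regular_ta M -> tau_sim M (tauclose_ta M).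
Proof.
  intros [Hinit Hreg].
  exists (in_tauclose_of_node M). split.
  - exists (init_s M). repeat split; auto. apply tauclose_refl.
  - intros s X a s' [n [Hn [-> Hs]]] He.
    destruct (Hreg _ He) as [_ Hs']; simpl in Hs'.
    destruct a as [| x v].
    + left. split; [reflexivity|].
      exists n. repeat split; auto. now apply (tauclose_silent_step M n s s').
    + right. exists (tauclose M s'). split.
      * apply (tauclose_ta_visible_edge M n s); auto. discriminate.
      * exists s'. repeat split; auto. apply tauclose_refl.
Qed.
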